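(* Let $\mathfrak{n}$ be a real nilpotent Lie algebra with a bi-invariant complex structure $J$. If there exists an inner product on $\mathfrak{n}$ that is Hermitian with respect to $J$ and pluriclosed, then $\mathfrak{n}$ is abelian.
   Context: A complex structure on a real Lie algebra $\mathfrak{g}$ is a linear map $J$ with $J^2=-I$ and $N_J(x,y)=[x,y]+J([Jx,y]+[x,Jy])-[Jx,Jy]=0$ for all $x,y$; it is bi-invariant if $J[x,y]=[x,Jy]$ for all $x,y$. An inner product $\langle\cdot,\cdot\rangle$ is Hermitian if $\langle Jx,Jy\rangle=\langle x,y\rangle$. Its torsion 3-form is $c(x,y,z)=-\langle[Jx,Jy],z\rangle-\langle[Jy,Jz],x\rangle-\langle[Jz,Jx],y\rangle$, and $\langle\cdot,\cdot\rangle$ is pluriclosed if $dc=0$, where $d$ is the Chevalley–Eilenberg differential on $\Lambda^*\mathfrak{g}^*$. *)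

From HB Require Import structures.
From mathcomp Require Import all_boot all_order all_algebra.
From mathcomp Require Export reals.
Set Implicit Arguments. Unset Strict Implicit. Unset Printing Implicit Defensive.
Import Order.TTheory GRing.Theory Num.Theory.
Local Open Scope ring_scope.

Section LieDefs.
Variables (R : realType) (n : nat).
Notation V := 'rV[R]_n.

Definition is_lie_bracket (br : V -> V -> V) : Prop :=
  [/\ (forall (a : R) (x y z : V), br (a *: x + y) z = a *: br x z + br y z),
      (forall (a : R) (x y z : V), br z (a *: x + y) = a *: br z x + br z y),
      (forall x : V, br x x = 0) &
      (forall x y z : V, br x (br y z) + br y (br z x) + br z (br x y) = 0)].

(* Lower central series: lcs 0 = g, lcs (k+1) = span [g, lcs k]. *)
Inductive lcs (br : V -> V -> V) : nat -> V -> Prop :=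
| lcs_base x : lcs br 0 x
| lcs_br k x y : lcs br k y -> lcs br k.+1 (br x y)
| lcs_zero k : lcs br k.+1 0
| lcs_add k u v : lcs br k.+1 u -> lcs br k.+1 v -> lcs br k.+1 (u + v)
| lcs_scale k (a : R) u : lcs br k.+1 u -> lcs br k.+1 (a *: u).

Definition nilpotent (br : V -> V -> V) : Prop :=
  exists k, forall x, lcs br k x -> x = 0.

Definition abelian (br : V -> V -> V) : Prop := forall x y, br x y = 0.

Definition linear_map (J : V -> V) : Prop :=
  forall (a : R) (x y : V), J (a *: x + y) = a *: J x + J y.

Definition nijenhuis (br : V -> V -> V) (J : V -> V) (x y : V) : V :=
  br x y + J (br (J x) y + br x (J y)) - br (J x) (J y).

Definition complex_structure (br : V -> V -> V) (J : V -> V) : Prop :=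
  [/\ linear_map J, (forall x, J (J x) = - x) &
      (forall x y, nijenhuis br J x y = 0)].

Definition bi_invariant (br : V -> V -> V) (J : V -> V) : Prop :=
  forall x y, J (br x y) = br x (J y).

Definition inner_product (ip : V -> V -> R) : Prop :=
  [/\ (forall (a : R) (x y z : V), ip (a *: x + y) z = a * ip x z + ip y z),
      (forall x y, ip x y = ip y x) &
      (forall x, x != 0 -> 0 < ip x x)].

Definition J_hermitian (J : V -> V) (ip : V -> V -> R) : Prop :=
  forall x y, ip (J x) (J y) = ip x y.

Definition torsion (br : V -> V -> V) (J : V -> V) (ip : V -> V -> R)
  (x y z : V) : R :=
  - ip (br (J x) (J y)) z - ip (br (J y) (J z)) x - ip (br (J z) (J x)) y.

(* Chevalley–Eilenberg differential of a 3-form (trivial coefficients):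
   (dc)(x0,..,x3) = sum_{i<j} (-1)^(i+j) c([xi,xj], x0,..^i..^j..,x3). *)
Definition ce_d3 (br : V -> V -> V) (c : V -> V -> V -> R)
  (x0 x1 x2 x3 : V) : R :=
  - c (br x0 x1) x2 x3 + c (br x0 x2) x1 x3 - c (br x0 x3) x1 x2
  - c (br x1 x2) x0 x3 + c (br x1 x3) x0 x2 - c (br x2 x3) x0 x1.

Definition pluriclosed (br : V -> V -> V) (J : V -> V) (ip : V -> V -> R)
  : Prop :=
  forall x0 x1 x2 x3, ce_d3 br (torsion br J ip) x0 x1 x2 x3 = 0.

End LieDefs.

From mathcomp Require Import all_boot all_order all_algebra.
From mathcomp Require Import ring.
Set Implicit Arguments. Unset Strict Implicit.
Import Order.TTheory GRing.Theory Num.Theory.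
Local Open Scope ring_scope.

(* For a bi-invariant J we have [Jx, Jy] = -[x, y], so the torsion form is the
   cyclic sum c(x,y,z) = <[x,y],z> + <[y,z],x> + <[z,x],y>.  Evaluating dc on
   (x, Jx, y, Jy) and using that the metric is J-Hermitian, all mixed terms
   cancel and dc(x, Jx, y, Jy) = -4 |[x,y]|^2, so dc = 0 kills every bracket. *)

Section InnerProduct.
Variables (R : realType) (n : nat) (ip : 'rV[R]_n -> 'rV[R]_n -> R).
Hypothesis ip_inner : inner_product ip.

Lemma ipDl x y z : ip (x + y) z = ip x z + ip y z.
Proof. by case: ip_inner => L _ _; have := L 1 x y z; rewrite mul1r scale1r. Qed.

Lemma ip0l z : ip 0 z = 0.
Proof. by apply/(addrI (ip 0 z)); rewrite -ipDl !addr0. Qed.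

Lemma ipNl x z : ip (- x) z = - ip x z.
Proof. by apply/(addrI (ip x z)); rewrite -ipDl !subrr ip0l. Qed.

Lemma ipC x y : ip x y = ip y x.
Proof. by case: ip_inner. Qed.

Lemma ipNr x z : ip z (- x) = - ip z x.
Proof. by rewrite ipC ipNl ipC. Qed.

Lemma ip_eq0 x : ip x x = 0 -> x = 0.
Proof.
case: ip_inner => _ _ pos hx; apply/eqP; apply: contraT => /pos.
by rewrite hx ltxx.
Qed.

End InnerProduct.

Section LieBracket.
Variables (R : realType) (n : nat) (br : 'rV[R]_n -> 'rV[R]_n -> 'rV[R]_n).
Hypothesis lie_br : is_lie_bracket br.

Lemma lieDl x y z : br (x + y) z = br x z + br y z.
Proof. by case: lie_br => L _ _ _; have := L 1 x y z; rewrite !scale1r. Qed.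

Lemma lieDr x y z : br z (x + y) = br z x + br z y.
Proof. by case: lie_br => _ L _ _; have := L 1 x y z; rewrite !scale1r. Qed.

Lemma lie0l z : br 0 z = 0.
Proof. by apply/(addrI (br 0 z)); rewrite -lieDl !addr0. Qed.

Lemma lie0r z : br z 0 = 0.
Proof. by apply/(addrI (br z 0)); rewrite -lieDr !addr0. Qed.

Lemma lieNl x z : br (- x) z = - br x z.
Proof. by apply/(addrI (br x z)); rewrite -lieDl !subrr lie0l. Qed.

Lemma lieNr x z : br z (- x) = - br z x.
Proof. by apply/(addrI (br z x)); rewrite -lieDr !subrr lie0r. Qed.

Lemma lievv x : br x x = 0.
Proof. by case: lie_br. Qed.

Lemma lieC x y : br x y = - br y x.
Proof.
apply/eqP; rewrite -addr_eq0.
by have := lievv (x + y); rewrite lieDl !lieDr !lievv add0r addr0 => ->.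
Qed.

End LieBracket.

Section BiInvariantComplexStructure.
Variables (R : realType) (n : nat) (br : 'rV[R]_n -> 'rV[R]_n -> 'rV[R]_n)
  (J : 'rV[R]_n -> 'rV[R]_n).
Hypotheses (lie_br : is_lie_bracket br) (cpx_J : complex_structure br J)
  (biJ : bi_invariant br J).

Lemma cpxD x y : J (x + y) = J x + J y.
Proof. by case: cpx_J => L _ _; have := L 1 x y; rewrite !scale1r. Qed.

Lemma cpx0 : J 0 = 0.
Proof. by apply/(addrI (J 0)); rewrite -cpxD !addr0. Qed.

Lemma cpxN x : J (- x) = - J x.
Proof. by apply/(addrI (J x)); rewrite -cpxD !subrr cpx0. Qed.

Lemma cpxK x : J (J x) = - x.
Proof. by case: cpx_J. Qed.

Lemma lieJr x y : br x (J y) = J (br x y).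
Proof. by rewrite biJ. Qed.

Lemma lieJl x y : br (J x) y = J (br x y).
Proof. by rewrite (lieC lie_br) lieJr (lieC lie_br y) cpxN opprK. Qed.

Lemma lieJJ x y : br (J x) (J y) = - br x y.
Proof. by rewrite lieJl lieJr cpxK. Qed.

Variable ip : 'rV[R]_n -> 'rV[R]_n -> R.
Hypotheses (ip_inner : inner_product ip) (ip_herm : J_hermitian J ip).

Lemma torsion_bi_invariant x y z :
  torsion br J ip x y z = ip (br x y) z + ip (br y z) x + ip (br z x) y.
Proof. by rewrite /torsion !lieJJ !(ipNl ip_inner) !opprK. Qed.

Lemma ce_d3_torsion_J x y :
  ce_d3 br (torsion br J ip) x (J x) y (J y) = - 4%:R * ip (br x y) (br x y).
Proof.
rewrite /ce_d3 !torsion_bi_invariant !(lieJl, lieJr, lieNl lie_br, lieNr lie_br).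
rewrite !(lievv lie_br, lie0l lie_br, lie0r lie_br, cpx0, cpxK, cpxN).
rewrite !(ipNl ip_inner, ipNr ip_inner, ip_herm, ip0l ip_inner).
ring.
Qed.

End BiInvariantComplexStructure.

Theorem mainTheorem15 (R : realType) (n : nat)
  (br : 'rV[R]_n -> 'rV[R]_n -> 'rV[R]_n) (J : 'rV[R]_n -> 'rV[R]_n) :
  is_lie_bracket br -> nilpotent br ->
  complex_structure br J -> bi_invariant br J ->
  (exists ip : 'rV[R]_n -> 'rV[R]_n -> R,
      [/\ inner_product ip, J_hermitian J ip & pluriclosed br J ip]) ->
  abelian br.
Proof.
move=> lie_br _ cpx_J biJ [ip [ip_inner ip_herm dc0]] x y.
apply: (ip_eq0 ip_inner); apply: (mulfI (_ : - 4%:R != 0 :> R)).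
  by rewrite oppr_eq0 pnatr_eq0.
by rewrite mulr0 -(ce_d3_torsion_J lie_br cpx_J biJ ip_inner ip_herm) dc0.
Qed.
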